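(* Let $n\ge 2$ and let $\mathcal{F}$ be an induced-$\mathcal{D}_2$-saturated family in $\mathcal{B}_n$. If $\emptyset\in\mathcal{F}$ or $[n]\in\mathcal{F}$, then $|\mathcal{F}|\ge n+1$.
   Context: $\mathcal{B}_n$ denotes the Boolean lattice $(2^{[n]},\subseteq)$. A family $\mathcal{F}\subseteq 2^{[n]}$ (ordered by inclusion) is induced-$\mathcal{P}$-saturated if it contains no induced copy of $\mathcal{P}$ (an injection $f$ with $u\le v\iff f(u)\subseteq f(v)$) but every family $\mathcal{F}'$ with $\mathcal{F}\subsetneq\mathcal{F}'\subseteq 2^{[n]}$ contains one. $\mathcal{D}_2$ (the diamond) is the four-element poset $\{A,B,C,D\}$ with $A<B<D$, $A<C<D$, and $B,C$ incomparable. *)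

From mathcomp Require Import all_boot.
Set Implicit Arguments. Unset Strict Implicit. Unset Printing Implicit Defensive.

(* The diamond poset D_2 on 'I_4: 0 = A (bottom), 1 = B, 2 = C, 3 = D (top).
   diamond_le u v  <->  u <= v in D_2. *)
Definition diamond_le (u v : 'I_4) : bool :=
  (u == v) || (val u == 0) || (val v == 3).

Definition has_induced_diamond (n : nat) (F : {set {set 'I_n}}) : Prop :=
  exists f : 'I_4 -> {set 'I_n},
    [/\ injective f, (forall u, f u \in F) &
        (forall u v, diamond_le u v = (f u \subset f v))].

Definition induced_diamond_saturated (n : nat) (F : {set {set 'I_n}}) : Prop :=
  ~ has_induced_diamond F /\
  (forall F' : {set {set 'I_n}}, F \proper F' -> has_induced_diamond F').

From mathcomp Require Import all_boot.
Set Implicit Arguments. Unset Strict Implicit. Unset Printing Implicit Defensive.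

(* Complementation exchanges set0 and [set: 'I_n] and preserves saturation, so
   assume set0 \in F.  For every point a there is then Z_a \in F with
   a \in Z_a and Z_a :\ a \in F: among pairs P \subset Z of members of F
   with a \in Z, a \notin P, take |P| maximal and then |Z| minimal.  If
   a |: P were a proper subset of Z it would not be in F, so adding it to F
   creates a diamond; in each position it can occupy, the remaining sets give
   either a diamond in F (with set0 as bottom or Z as top) or a pair with a
   larger lower set.  The map a |-> Z_a avoids set0 and is injective, since
   Z_a = Z_b with a != b gives the diamond set0, Z :\ a, Z :\ b, Z.  Hence
   #|F| >= n + 1. *)

Definition dA : 'I_4 := @Ordinal 4 0 isT.
Definition dB : 'I_4 := @Ordinal 4 1 isT.
Definition dC : 'I_4 := @Ordinal 4 2 isT.
Definition dD : 'I_4 := @Ordinal 4 3 isT.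

Lemma diamond_cases (u : 'I_4) : [\/ u = dA, u = dB, u = dC | u = dD].
Proof.
by case: u => [[|[|[|[|m]]]] lt_m4]; [constructor 1|constructor 2|constructor 3|constructor 4|];
  rewrite // /dA /dB /dC /dD; congr Ordinal; apply: bool_irrelevance.
Qed.

Lemma diamond_le_anti u v : diamond_le u v -> diamond_le v u -> u = v.
Proof. by case: (diamond_cases u) => ->; case: (diamond_cases v) => ->. Qed.

Lemma diamond_le_rev u v : diamond_le (rev_ord v) (rev_ord u) = diamond_le u v.
Proof.
by case: (diamond_cases u) => ->; case: (diamond_cases v) => ->;
  rewrite /diamond_le /= -?val_eqE.
Qed.

Section DiamondPattern.
Variable n : nat.
Implicit Types (F : {set {set 'I_n}}) (A B C D : {set 'I_n}).

Definition diamond_pattern A B C D : Prop :=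
  [/\ A \subset B :&: C, B :|: C \subset D, ~~ (B \subset C) & ~~ (C \subset B)].

Lemma diamond_patternC A B C D :
  diamond_pattern A B C D -> diamond_pattern A C B D.
Proof. by case; rewrite setIC setUC. Qed.

Lemma diamond_pattern_embedding (f : 'I_4 -> {set 'I_n}) :
  (forall u v, diamond_le u v = (f u \subset f v)) ->
  diamond_pattern (f dA) (f dB) (f dC) (f dD).
Proof.
by move=> f_iso; split; rewrite ?subsetI ?subUset -!f_iso.
Qed.

Lemma diamond_pattern_shrink_bot A' A B C D :
  A' \subset A -> diamond_pattern A B C D -> diamond_pattern A' B C D.
Proof. by move=> A'A [AI *]; split=> //; exact: subset_trans A'A AI. Qed.

Lemma diamond_pattern_grow_top A B C D D' :
  D \subset D' -> diamond_pattern A B C D -> diamond_pattern A B C D'.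
Proof. by move=> DD' [? UD *]; split=> //; exact: subset_trans UD DD'. Qed.

Lemma has_diamond_pattern F A B C D :
  A \in F -> B \in F -> C \in F -> D \in F -> diamond_pattern A B C D ->
  has_induced_diamond F.
Proof.
move=> AF BF CF DF [/subsetIP[AB AC] /subUsetP[BD CD] nBC nCB].
have nBA : ~~ (B \subset A) by apply: contra nBC => /subset_trans; apply.
have nCA : ~~ (C \subset A) by apply: contra nCB => /subset_trans; apply.
have nDB : ~~ (D \subset B) by apply: contra nCB; apply: subset_trans.
have nDC : ~~ (D \subset C) by apply: contra nBC; apply: subset_trans.
have nDA : ~~ (D \subset A) by apply: contra nDB => /subset_trans; apply.
pose f (u : 'I_4) := match val u with 0 => A | 1 => B | 2 => C | _ => D end.
have f_iso u v : diamond_le u v = (f u \subset f v).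
  case: (diamond_cases u) => ->; case: (diamond_cases v) => ->;
  rewrite /f /diamond_le /= ?subxx ?(subset_trans AB BD) //; exact/esym/negbTE.
exists f; split=> [u v fuv|u|//]; first by apply: diamond_le_anti; rewrite f_iso fuv.
by case: (diamond_cases u) => ->.
Qed.

End DiamondPattern.

Section Complement.
Variable n : nat.
Implicit Types (F : {set {set 'I_n}}) (X : {set 'I_n}).

Definition compl_family F := [set ~: X | X in F].

Lemma mem_compl_family F X : (X \in compl_family F) = (~: X \in F).
Proof.
apply/imsetP/idP => [[Y YF ->]|XF]; first by rewrite setCK.
by exists (~: X); rewrite ?setCK.
Qed.

Lemma compl_familyK : involutive compl_family.
Proof. by move=> F; apply/setP => X; rewrite !mem_compl_family setCK. Qed.

Lemma card_compl_family F : #|compl_family F| = #|F|.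
Proof. by rewrite card_imset //; apply: setC_inj. Qed.

Lemma compl_family_diamond F :
  has_induced_diamond F -> has_induced_diamond (compl_family F).
Proof.
case=> f [f_inj fF f_iso]; exists (fun u => ~: f (rev_ord u)); split.
- by move=> u v /setC_inj /f_inj /rev_ord_inj.
- by move=> u; rewrite mem_compl_family setCK.
- by move=> u v; rewrite setCS -f_iso diamond_le_rev.
Qed.

Lemma compl_family_saturated F :
  induced_diamond_saturated F -> induced_diamond_saturated (compl_family F).
Proof.
case=> noF satF; split=> [/compl_family_diamond|F' ltFF'].
  by rewrite compl_familyK.
rewrite -(compl_familyK F'); apply/compl_family_diamond/satF.
move: ltFF'; rewrite !properEcard !card_compl_family => /andP[/subsetP sFF' ->].
by rewrite andbT; apply/subsetP => X XF; rewrite mem_compl_family sFF' ?mem_compl_family ?setCK.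
Qed.

End Complement.

Section Saturation.
Variables (n : nat) (F : {set {set 'I_n}}).
Implicit Types (A B C D Y : {set 'I_n}).
Hypothesis satF : induced_diamond_saturated F.

(* A missing set [Y] that completes a diamond as its right side [C] is
   reported as its left side [B], using [diamond_patternC]. *)
Lemma saturated_diamond_through Y : Y \notin F ->
  exists A B C D, diamond_pattern A B C D /\
    [\/ [/\ A = Y, B \in F, C \in F & D \in F],
        [/\ B = Y, A \in F, C \in F & D \in F] |
        [/\ D = Y, A \in F, B \in F & C \in F]].
Proof.
case: satF => noF satF' YF.
have ltFY : F \proper Y |: F.
  by rewrite properE subsetUr; apply/subsetPn; exists Y; rewrite ?setU11.
have [f [f_inj fF f_iso]] := satF' _ ltFY.
have [u0 /eqP fu0] : exists u0, f u0 == Y.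
  apply/existsP; apply: contra_notT noF => /existsPn noY.
  exists f; split=> // u; have := fF u; by rewrite in_setU1 (negbTE (noY u)).
have otherF v : v != u0 -> f v \in F.
  by move=> vu0; have := fF v; rewrite in_setU1 -fu0 (inj_eq f_inj) (negbTE vu0).
have pat := diamond_pattern_embedding f_iso.
case: (diamond_cases u0) => u0E; subst u0 Y.
- by exists (f dA), (f dB), (f dC), (f dD); split=> //; constructor 1; split=> //; apply: otherF.
- by exists (f dA), (f dB), (f dC), (f dD); split=> //; constructor 2; split=> //; apply: otherF.
- exists (f dA), (f dC), (f dB), (f dD); split; first exact: diamond_patternC.
  by constructor 2; split=> //; apply: otherF.
- by exists (f dA), (f dB), (f dC), (f dD); split=> //; constructor 3; split=> //; apply: otherF.
Qed.

Lemma saturated_cover (a : 'I_n) : exists2 Z, Z \in F & a \in Z.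
Proof.
have [aF|aNF] := boolP ([set a] \in F); first by exists [set a]; rewrite ?set11.
have [A [B [C [D [+ cases]]]]] := saturated_diamond_through aNF.
case: cases => [[-> _ _ DF]|[-> _ _ DF]|[-> _ _ _]];
  case=> /subsetIP[AB _] /subUsetP[BD CD] nBC nCB.
- by exists D; rewrite // (subsetP (subset_trans AB BD)) ?set11.
- by exists D; rewrite // (subsetP BD) ?set11.
- move: BD CD nBC nCB; rewrite !subset1.
  by do 2!case/orP=> /eqP->; rewrite ?subxx ?sub0set.
Qed.

End Saturation.

Section Cofacet.
Variables (n : nat) (F : {set {set 'I_n}}) (a : 'I_n).
Implicit Types (C D P Z : {set 'I_n}).
Hypotheses (satF : induced_diamond_saturated F) (F0 : set0 \in F).

Definition separated C D := [&& C \in F, D \in F, C \subset D, a \in D & a \notin C].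

Section ExtremalPair.
Variables P Z : {set 'I_n}.
Hypotheses (sepPZ : separated P Z)
  (P_max : forall C D, separated C D -> #|C| <= #|P|)
  (Z_min : forall D, separated P D -> #|Z| <= #|D|).

Let Y := a |: P.

Lemma extremal_comparable C D : C \in F -> D \in F -> Y \subset D -> C \subset D ->
  (Y \subset C) || (C \subset Y).
Proof.
move=> CF DF YD CD; apply/negPn/negP => /norP[nYC nCY].
case: (boolP (P \subset C)) => PC.
  have aNC : a \notin C by apply: contra nYC => aC; rewrite subUset sub1set aC.
  have ltPC : P \proper C.
    by rewrite properE PC; apply: contra nCY => /subset_trans; apply; apply: subsetUr.
  have := P_max (C := C) (D := D).
  rewrite /separated CF DF CD aNC (subsetP YD) ?setU11 // => /(_ isT).
  by rewrite leqNgt proper_card.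
have PF : P \in F by case/and5P: sepPZ.
case: satF => noF _; apply: noF; apply: (has_diamond_pattern F0 PF CF DF).
split=> //; first exact: sub0set.
  by rewrite subUset CD (subset_trans (subsetUr _ _) YD).
by apply: contra nCY => /subset_trans; apply; apply: subsetUr.
Qed.

Lemma extremal_setD1 : Z :\ a = P.
Proof.
case/and5P: sepPZ => PF ZF PZ aZ aNP.
have YZ : Y \subset Z by rewrite subUset sub1set aZ.
suff YeqZ : Y = Z by rewrite -YeqZ setU1K.
apply/eqP; rewrite eqEsubset YZ; apply/negPn/negP => nZY.
have YNF : Y \notin F.
  apply/negP => YF; have := Z_min (D := Y).
  rewrite /separated PF YF subsetUr setU11 aNP => /(_ isT).
  by rewrite leqNgt proper_card // properE YZ.
case: satF => noF _.
have [A [B [C [D [+ cases]]]]] := saturated_diamond_through satF YNF.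
case: cases => [[-> BF CF DF]|[-> AF CF DF]|[-> AF BF CF]] pat.
- by apply: noF; apply: (has_diamond_pattern F0 BF CF DF);
    apply: diamond_pattern_shrink_bot pat; apply: sub0set.
- case: pat => _ /subUsetP[YD CD] nYC nCY.
  by have := extremal_comparable CF DF YD CD; rewrite (negbTE nYC) (negbTE nCY).
- by apply: noF; apply: (has_diamond_pattern AF BF CF ZF);
    apply: diamond_pattern_grow_top pat.
Qed.

End ExtremalPair.

Lemma saturated_cofacet : exists Z, [/\ Z \in F, a \in Z & Z :\ a \in F].
Proof.
have [Z0 Z0F aZ0] := saturated_cover satF a.
have sep0 : separated set0 Z0 by rewrite /separated F0 Z0F sub0set aZ0 in_set0.
case: (@arg_maxnP _ (set0, Z0) (fun p => separated p.1 p.2) (fun p => #|p.1|) sep0).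
move=> [P Z1] /= sepPZ1 P_max.
case: (@arg_minnP _ Z1 (separated P) (fun D => #|D|) sepPZ1) => Z sepPZ Z_min.
have PZa := extremal_setD1 sepPZ (fun C D => P_max (C, D)) Z_min.
by case/and5P: sepPZ => PF ZF _ aZ _; exists Z; rewrite PZa.
Qed.

End Cofacet.

Lemma setD1_diamond n (F : {set {set 'I_n}}) (Z : {set 'I_n}) (a b : 'I_n) :
  a != b -> a \in Z -> b \in Z -> set0 \in F -> Z \in F ->
  Z :\ a \in F -> Z :\ b \in F -> has_induced_diamond F.
Proof.
move=> ab aZ bZ F0 ZF ZaF ZbF.
apply: (has_diamond_pattern F0 ZaF ZbF ZF); split; rewrite ?sub0set //.
- by rewrite subUset !subD1set.
- by apply/subsetPn; exists b; rewrite !inE ?eqxx // eq_sym ab.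
- by apply/subsetPn; exists a; rewrite !inE ?eqxx // ab.
Qed.

Lemma saturated_set0_card n (F : {set {set 'I_n}}) :
  induced_diamond_saturated F -> set0 \in F -> n.+1 <= #|F|.
Proof.
move=> satF F0.
have [g gP] := fin_all_exists (fun a => saturated_cofacet a satF F0).
have g_inj : injective g.
  move=> a b gab; apply/eqP/negPn/negP => ab; case: satF => noF _; apply: noF.
  have [gaF aga gaaF] := gP a; have [_ bgb gbbF] := gP b; rewrite -gab in bgb gbbF.
  exact: setD1_diamond ab aga bgb F0 gaF gaaF gbbF.
have gF : g @: [set: 'I_n] \subset F :\ set0.
  apply/subsetP => _ /imsetP[a _ ->]; have [gaF aga _] := gP a.
  by rewrite in_setD1 gaF andbT; apply/set0Pn; exists a.
rewrite (cardsD1 set0 F) F0 add1n ltnS.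
by have := subset_leq_card gF; rewrite card_imset // cardsT card_ord.
Qed.

Theorem lemma3p3 (n : nat) (F : {set {set 'I_n}}) :
  2 <= n -> induced_diamond_saturated F ->
  (set0 \in F) || ([set: 'I_n] \in F) ->
  n.+1 <= #|F|.
Proof.
move=> _ satF /orP[F0|FT]; first exact: saturated_set0_card.
rewrite -card_compl_family; apply: saturated_set0_card.
  exact: compl_family_saturated.
by rewrite mem_compl_family setC0.
Qed.
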